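(* Let $\delta < \lambda$ be regular cardinals with $\lambda > \delta^+$, $\delta$ inaccessible, and $\lambda$ either inaccessible or the successor of a cardinal of cofinality $> \delta$. Then $\mathcal{K}(\delta,\lambda)$ satisfies the $\delta^{++}$-chain condition whenever $2^\delta = \delta^+$.
   Context: For regular $\kappa_0\le\kappa_1$, $\mathcal{K}(\kappa_0,\kappa_1)$ is the set of triples $\langle w,\alpha,\bar r\rangle$ with $w\subseteq\kappa_1$, $|w|=\kappa_0$, $\alpha<\kappa_0$, and $\bar r=\langle r_i:i\in w\rangle$ a sequence of functions from $\alpha$ to $\{0,1\}$, ordered by $\langle w^1,\alpha^1,\bar r^1\rangle\le\langle w^2,\alpha^2,\bar r^2\rangle$ iff $w^1\subseteq w^2$, $\alpha^1\le\alpha^2$, $r^1_i\subseteq r^2_i$ for $i\in w^1$, and $|\{i\in w^1: r^2_i\restriction(\alpha^2-\alpha^1)\text{ is not constantly }0\}|<\kappa_0$. *)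

(* cardinals are handled relationally through the
   library's cardinality comparisons [A #<= B] and [A #= B] on classical sets. *)
From HB Require Import structures.
From mathcomp Require Import all_boot all_order all_algebra.
From mathcomp Require Import boolp classical_sets functions cardinality.

Set Implicit Arguments.
Unset Strict Implicit.
Unset Printing Implicit Defensive.

Local Open Scope classical_set_scope.
Local Open Scope card_scope.

Definition card_lt T U (A : set T) (B : set U) := A #<= B /\ ~ (B #<= A).

Definition is_succ_card T U (K : set T) (S : set U) :=
  card_lt K S /\ forall Z : set U, Z `<=` S -> card_lt Z S -> Z #<= K.

Definition cf_gt T U (X : set T) (Y : set U) :=
  infinite_set X /\
  forall F : U -> set T, (forall u, Y u -> card_lt (F u) X) ->
    ~ (X `<=` \bigcup_(u in Y) F u).

Definition regular_card T (X : set T) :=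
  infinite_set X /\ forall J : set T, card_lt J X -> cf_gt X J.

Definition strong_limit T (X : set T) :=
  forall Z : set T, card_lt Z X -> card_lt [set Y : set T | Y `<=` Z] X.

Definition inaccessible T (X : set T) :=
  ~ countable X /\ regular_card X /\ strong_limit X.

(** [lt] is a strict well-order on D whose order type is the initial ordinal
    |D| (every proper initial segment has cardinality < |D|).  Elements of D
    are thus exactly the ordinals < kappa0 = |D|. *)
Definition initial_wo (D : Type) (lt : D -> D -> Prop) :=
  [/\ well_founded lt,
      (forall a, ~ lt a a),
      (forall a b c, lt a b -> lt b c -> lt a c),
      (forall a b, [\/ lt a b, a = b | lt b a])
    & forall a : D, card_lt [set b | lt b a] [set: D]].

(** Conditions of K(kappa0, kappa1), with kappa0 = |D| (ordinals ordered by
    [lt]) and kappa1 = |L|.  A condition <w, alpha, (r_i)_{i in w}> is stored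
    as a triple where [r i] is only relevant for [i \in w] and on the
    ordinals [beta < alpha] (its values elsewhere are irrelevant). *)
Record Kcond (D L : Type) := MkK {
  Kw : set L;
  Kalpha : D;
  Kr : L -> D -> bool }.

Definition Kcond_ok (D L : Type) (p : Kcond D L) :=
  Kw p #= [set: D].

Definition Kle (D L : Type) (lt : D -> D -> Prop) (p q : Kcond D L) :=
  [/\ Kw p `<=` Kw q,
      lt (Kalpha p) (Kalpha q) \/ Kalpha p = Kalpha q,
      (forall i, Kw p i -> forall beta, lt beta (Kalpha p) ->
          Kr p i beta = Kr q i beta)
    & card_lt
        [set i | Kw p i /\ exists beta,
            ~ lt beta (Kalpha p) /\ lt beta (Kalpha q) /\ Kr q i beta = true]
        [set: D]].

Definition Kcompat (D L : Type) (lt : D -> D -> Prop) (p q : Kcond D L) :=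
  exists s, Kcond_ok s /\ Kle lt p s /\ Kle lt q s.

Definition Kantichain (D L : Type) (lt : D -> D -> Prop) (A : set (Kcond D L)) :=
  (forall p, A p -> Kcond_ok p) /\
  forall p q, A p -> A q -> p <> q -> ~ Kcompat lt p q.

From HB Require Import structures.
From mathcomp Require Import all_boot all_order all_algebra.
From mathcomp Require Import boolp classical_sets functions cardinality wochoice.
From Stdlib Require Import ClassicalEpsilon.
Local Open Scope classical_set_scope.
Local Open Scope card_scope.

Set Implicit Arguments.
Unset Strict Implicit.

(* Two conditions of the same height alpha that agree below alpha on their
   common coordinates are compatible: take the union of the supports.  Fix an
   antichain A.  For a support S of size <= delta, the "type" on S of a
   condition (its height and its bits on S) ranges over a set of size 2^delta
   because delta is a strong limit; choose one member of A for each type.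
   Iterating "add the supports of all chosen members, for all small S" delta^+
   times from the empty set yields N of size <= 2^delta that is closed under
   this operation.  Every support w_q of q in A lies in N: the member p chosen
   for the type of q on S := w_q /\ N has w_p <= N, so p and q agree on
   w_p /\ w_q <= S, hence are compatible, hence equal.  So q is determined by
   w_q and its type on w_q, and |A| <= 2^delta = delta^+. *)

Lemma card_le_inj T U (A : set T) (B : set U) (f : T -> U) :
  (forall x, A x -> B (f x)) -> (forall x y, A x -> A y -> f x = f y -> x = y) ->
  A #<= B.
Proof.
move=> fAB finj.
elim/Ppointed: U => U in B f fAB finj *.
  case: (pselect (exists x, A x)) => [[x /fAB]|nA]; first by case: (no (f x)).
  have -> : A = set0 by apply/seteqP; split=> // x Ax; apply: nA; exists x.
  exact: card_ge0.
apply/pcard_leP; apply/injfunPex; exists f => //.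
by move=> x y /set_mem Ax /set_mem Ay; apply: finj.
Qed.

Lemma card_le_exists_inj T U (A : set T) (B : set U) : A #<= B -> U ->
  exists f : T -> U,
    (forall x, A x -> B (f x)) /\ (forall x y, A x -> A y -> f x = f y -> x = y).
Proof.
move=> + u; elim/Ppointed: U => U in B u *; first by case: (no u).
move=> /pcard_leP /injfunPex [f fm fi]; exists f; split=> //.
by move=> x y Ax Ay; apply: fi; apply/mem_set.
Qed.

Lemma card_le_lt_trans T U V (A : set T) (B : set U) (C : set V) :
  A #<= B -> card_lt B C -> card_lt A C.
Proof.
move=> AB [BC nCB]; split; first exact: card_le_trans AB BC.
by move=> CA; apply: nCB; apply: card_le_trans CA AB.
Qed.

Lemma card_le_powerset T U (A : set T) (B : set U) :
  A #<= B -> [set X : set T | X `<=` A] #<= [set Y : set U | Y `<=` B].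
Proof.
move=> AB; have [[x0 Ax0]|nA] := pselect (exists x, A x); last first.
  apply: (@card_le_inj _ _ _ _ (fun _ => set0)) => [X _|X Y XA YA _].
    exact: sub0set.
  by apply/seteqP; split=> x; [move/XA | move/YA] => Ax; case: nA; exists x.
have [u _] : exists u : U, B u.
  apply: contrapT => nB; have B0 : B = set0.
    by apply/seteqP; split=> // u Bu; apply: nB; exists u.
  by move: AB; rewrite B0 => /card_le0P A0; rewrite A0 in Ax0.
have [f [fAB finj]] := card_le_exists_inj AB u.
apply: (@card_le_inj _ _ _ _ (fun X => f @` X)).
  by move=> X XA _ [x Xx <-]; apply: fAB; exact: XA.
have sub X Y : X `<=` A -> Y `<=` A -> f @` X = f @` Y -> X `<=` Y.
  move=> XA YA XY x Xx; have : (f @` Y) (f x) by rewrite -XY; exists x.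
  by case=> y Yy /finj <- //; [apply: YA | apply: XA].
by move=> X Y XA YA XY; apply/seteqP; split; apply: sub.
Qed.

Lemma card_le_setX_powerset2 T (Q : set T) :
  Q `*` Q #<= [set F : set (set T) | F `<=` [set Y | Y `<=` Q]].
Proof.
apply: (@card_le_inj _ _ _ _ (fun z => [set [set z.1]; [set z.1; z.2]])).
  by move=> [x y] [/= Qx Qy] Y [->|->] t /= => [->|[]->].
have mem t (Y Z : set T) : Y = Z -> Y t -> Z t by move=> ->.
move=> [x y] [x' y'] _ _ /= E.
have xx' : x = x'.
  have : [set [set x']; [set x'; y']] [set x] by rewrite -E; left.
  by case=> /esym /mem => [/(_ x' erefl)|/(_ x' (or_introl erefl))] ->.
subst x'.
have yy' : y = x \/ y = y'.
  have : [set [set x]; [set x; y']] [set x; y] by rewrite -E; right.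
  by case=> /mem /(_ (or_intror erefl)) => [|[]]; [left | left | right].
have y'y : y' = x \/ y' = y.
  have : [set [set x]; [set x; y]] [set x; y'] by rewrite E; right.
  by case=> /mem /(_ (or_intror erefl)) => [|[]]; [left | left | right].
by case: yy' y'y => -> // [] ->.
Qed.

Lemma card_lt_powerset T (t : T) : card_lt [set: T] [set: set T].
Proof.
split.
  apply: (@card_le_inj _ _ _ _ (fun x => [set x])) => // x y _ _ e.
  by have : [set y] x by rewrite -e.
move=> /card_le_exists_inj /(_ t) [f [_ finj]].
pose X := [set x | exists2 Y, f Y = x & ~ Y x].
have nX : ~ X (f X).
  by move=> XfX; case: (XfX) => Y /(finj _ _ I I) -> /(_ XfX).
exact/nX/(ex_intro2 _ _ X erefl nX).
Qed.

Lemma wo_card_le X Y (r : X -> X -> Prop) : well_founded r ->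
  (forall x y, x <> y -> r x y \/ r y x) ->
  (forall x, card_lt [set y | r y x] [set: Y]) -> [set: X] #<= [set: Y].
Proof.
move=> wf tot seg.
have [[x0 _]|nX] := pselect (exists x : X, True); last first.
  have -> : [set: X] = set0 by apply/seteqP; split=> // x _; apply: nX; exists x.
  exact: card_ge0.
have [y0 _] : exists y : Y, True.
  apply: contrapT => nY; apply: (seg x0).2.
  have -> : [set: Y] = set0 by apply/seteqP; split=> // y _; apply: nY; exists y.
  exact: card_ge0.
pose fresh (P : set Y) := epsilon (inhabits y0) (fun y => ~ P y).
(* f x avoids the values of f below x; such a value exists by [seg x]. *)
pose f := Fix wf (fun _ => Y)
  (fun x rec => fresh [set y | exists z (h : r z x), rec z h = y]).
have fE x : f x = fresh [set y | exists2 z, r z x & f z = y].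
  rewrite /f Fix_eq => [|x' g1 g2 e]; last first.
    by congr fresh; apply/seteqP; split=> y [z [h <-]]; exists z, h; rewrite e.
  by congr fresh; apply/seteqP; split=> y;
    [case=> z [h <-]; exists z | case=> z h <-; exists z, h].
have fresh_spec (P : set Y) : (exists y, ~ P y) -> ~ P (fresh P).
  exact: epsilon_spec (inhabits y0) (fun y => ~ P y).
have f_fresh x z : r z x -> f z <> f x.
  move=> rzx; rewrite [f x]fE; set S := [set y | _] => fzS; apply: (fresh_spec S).
    apply: contrapT => /forallNP nS; apply: (seg x).2.
    apply: card_le_trans (card_image_le f [set y | r y x]).
    by apply: subset_card_le => y _; have /contrapT [z' rz'x <-] := nS y; exists z'.
  by rewrite -fzS; exists z.
apply: (@card_le_inj _ _ _ _ f) => // x y _ _ fxy; apply: contrapT => nxy.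
by case: (tot _ _ nxy) => [/f_fresh|/f_fresh/nesym].
Qed.

Lemma exists_wo T : exists r : T -> T -> Prop,
  [/\ well_founded r, (forall x, ~ r x x), (forall x y z, r x y -> r y z -> r x z)
    & (forall x y, x <> y -> r x y \/ r y x)].
Proof.
have [R Rwo] := well_ordering_principle {classic T}.
have Rch : wo_chain R predT by apply: withinW.
have Ranti x y : R x y -> R y x -> x = y.
  by move=> xy yx; apply: (wo_chain_antisymmetric Rch) => //; rewrite xy yx.
have Rtot x y : R x y || R y x by apply: (wo_chainW Rch).
have Rmin (S : set T) x : S x -> exists2 m, S m & forall y, S y -> R m y.
  move=> Sx; have [|m [[/asboolP Sm lbm] _]] := Rwo [pred y | `[< S y >]].
    by exists x; apply/asboolP.
  by exists m => // y Sy; apply: lbm; apply/asboolP.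
have Rtrans x y z : R x y -> R y z -> R x z.
  move=> xy yz; have [m mxyz lbm] := Rmin [set x; y; z] x (or_introl (or_introl erefl)).
  case: mxyz => [[]|] ->> in lbm *.
  - by apply: lbm; right.
  - by rewrite (Ranti _ _ xy (lbm x _)) //; do 2 left.
  - by rewrite -(Ranti _ _ yz (lbm y _)) //; left; right.
exists (fun x y => R x y /\ x <> y); split.
- move=> x; apply: contrapT => nAx.
  have [m nAm lbm] := Rmin [set x | ~ Acc (fun x y => R x y /\ x <> y) x] x nAx.
  apply: nAm; constructor => y [ym nym]; apply: contrapT => nAy.
  by apply: nym; apply: Ranti ym (lbm _ nAy).
- by move=> x [].
- move=> x y z [xy nxy] [yz nyz]; split; first exact: Rtrans xy yz.
  by move=> exz; subst z; apply: nxy; apply: Ranti.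
- move=> x y nxy; case/orP: (Rtot x y) => h; [left | right]; split=> // e.
  exact: nxy.
Qed.

Section StrongLimit.
Variables (D : Type) (lt : D -> D -> Prop) (d0 : D).
Hypotheses (wo : initial_wo lt) (SL : strong_limit [set: D]).

Let wf : well_founded lt. Proof. by case: wo. Qed.
Let irr a : ~ lt a a. Proof. by case: wo => _ lt_irr _ _ _; exact: lt_irr. Qed.
Let trans a b c : lt a b -> lt b c -> lt a c.
Proof. by case: wo => _ _ lt_trans _ _; exact: lt_trans. Qed.
Let tri a b : [\/ lt a b, a = b | lt b a]. Proof. by case: wo. Qed.
Let seg_lt a : card_lt [set b | lt b a] [set: D]. Proof. by case: wo. Qed.

Lemma strong_limit_exists_neq : exists d1, d0 <> d1.
Proof.
have set0_lt : card_lt (@set0 D) [set: D].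
  split; first exact: card_ge0.
  by move/card_le0P => D0; have : [set: D] d0 by []; rewrite D0.
apply: contrapT => /forallNP all_d0; apply: (SL set0_lt).2.
apply: (@card_le_inj _ _ _ _ (fun _ => set0)) => [x _|x y _ _ _].
  exact: subset_refl.
by rewrite -(contrapT (all_d0 x)) -(contrapT (all_d0 y)).
Qed.

Lemma strong_limit_powerset U (Z : set U) :
  card_lt Z [set: D] -> card_lt [set Y | Y `<=` Z] [set: D].
Proof.
move=> ZD; have [f [_ finj]] := card_le_exists_inj ZD.1 d0.
have /card_eqPle [fZZ ZfZ] : f @` Z #= Z.
  by apply: inj_card_eq => x y /set_mem Zx /set_mem Zy; apply: finj.
exact: card_le_lt_trans (card_le_powerset ZfZ) (SL (card_le_lt_trans fZZ ZD)).
Qed.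

Definition le_wo x y := lt x y \/ x = y.

Lemma le_wo_trans a b c : le_wo a b -> le_wo b c -> le_wo a c.
Proof. by move=> [ab|->] [bc|<-]; [left; exact: trans ab bc | left | left | right]. Qed.

Lemma card_lt_le_wo m : card_lt [set x | le_wo x m] [set: D].
Proof.
apply: card_le_lt_trans (SL (seg_lt m)).
apply: (@card_le_inj _ _ _ _ (fun x => [set b | lt b x])).
  by move=> x [xm|->] b /= bx //; exact: trans bx xm.
move=> x y _ _ e; apply: contrapT => nxy.
have [xy|//|yx] := tri x y.
  by have : [set b | lt b y] x by []; rewrite -e => /irr.
by have : [set b | lt b x] y by []; rewrite e => /irr.
Qed.

Definition max_wo a b := if pselect (lt a b) then b else a.

Lemma le_max_wol a b : le_wo a (max_wo a b).
Proof. by rewrite /max_wo; case: pselect => ab; [left | right]. Qed.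

Lemma le_max_wor a b : le_wo b (max_wo a b).
Proof.
rewrite /max_wo; case: pselect => ab /=; first by right.
by have [//|->|ba] := tri a b; [right | left].
Qed.

(* Goedel's ordering of pairs: first by maximum, then lexicographically.  An
   initial segment is contained in the square of a closed initial segment of D,
   whence it is small since D is a strong limit. *)
Definition lt_pair (p q : D * D) :=
  lt (max_wo p.1 p.2) (max_wo q.1 q.2) \/
  (max_wo p.1 p.2 = max_wo q.1 q.2 /\ (lt p.1 q.1 \/ (p.1 = q.1 /\ lt p.2 q.2))).

Lemma lt_pair_wf : well_founded lt_pair.
Proof.
suff acc m a b : max_wo a b = m -> Acc lt_pair (a, b) by move=> [a b]; exact: acc.
elim/(well_founded_induction wf): m a b => m IHm a.
elim/(well_founded_induction wf): a => a IHa b.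
elim/(well_founded_induction wf): b => b IHb abm.
constructor => -[c d] [/= lt_cd|[/= cd_ab [ca|[ca db]]]].
- by rewrite abm in lt_cd; exact: IHm lt_cd c d erefl.
- exact: IHa ca d (etrans cd_ab abm).
- by subst c; exact: IHb db (etrans cd_ab abm).
Qed.

Lemma lt_pair_total p q : p <> q -> lt_pair p q \/ lt_pair q p.
Proof.
move: p q => [a b] [c d] ne; rewrite /lt_pair /=.
have [?|e|?] := tri (max_wo a b) (max_wo c d);
  [by left; left | rewrite e | by right; left].
have [?|ac|?] := tri a c;
  [by left; right; split; last left | | by right; right; split; last left].
have [?|bd|?] := tri b d;
  [by left; right; split; last right | | by right; right; split; last right].
by case: ne; rewrite ac bd.
Qed.

Lemma lt_pair_seg q :
  [set p | lt_pair p q] `<=`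
  [set x | le_wo x (max_wo q.1 q.2)] `*` [set x | le_wo x (max_wo q.1 q.2)].
Proof.
move=> p pq; have pm : le_wo (max_wo p.1 p.2) (max_wo q.1 q.2).
  by case: pq => [?|[-> _]]; [left | right].
by split; [exact: le_wo_trans (le_max_wol _ _) pm |
           exact: le_wo_trans (le_max_wor _ _) pm].
Qed.

Lemma card_le_square : [set: D * D] #<= [set: D].
Proof.
apply: (wo_card_le lt_pair_wf lt_pair_total) => q.
apply: card_le_lt_trans (subset_card_le (@lt_pair_seg q)) _.
exact: card_le_lt_trans (card_le_setX_powerset2 _)
  (strong_limit_powerset (strong_limit_powerset (card_lt_le_wo _))).
Qed.

End StrongLimit.

Section SquareCardinal.
Variables (U : Type) (u0 : U).
Hypothesis sqU : [set: U * U] #<= [set: U].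

Lemma card_le_setX_sq T V (A : set T) (B : set V) :
  A #<= [set: U] -> B #<= [set: U] -> A `*` B #<= [set: U].
Proof.
move=> AU BU; have [f [_ finj]] := card_le_exists_inj AU u0.
have [g [_ ginj]] := card_le_exists_inj BU u0.
have [h [_ hinj]] := card_le_exists_inj sqU u0.
apply: (@card_le_inj _ _ _ _ (fun z => h (f z.1, g z.2))) => // -[a b] [a' b'].
move=> [/= Aa Bb] [/= Aa' Bb'] /(hinj _ _ I I) [fa gb].
by rewrite (finj _ _ Aa Aa' fa) (ginj _ _ Bb Bb' gb).
Qed.

Lemma card_le_bigcup_sq I T (J : set I) (F : I -> set T) :
  J #<= [set: U] -> (forall i, J i -> F i #<= [set: U]) ->
  \bigcup_(i in J) F i #<= [set: U].
Proof.
move=> JU FU.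
have [[x0 [i0 _ _]]|nF] := pselect (exists x, (\bigcup_(i in J) F i) x); last first.
  have -> : \bigcup_(i in J) F i = set0.
    by apply/seteqP; split=> // x Fx; apply: nF; exists x.
  exact: card_ge0.
pose covers x i := J i /\ F i x.
pose inj_on i (g : T -> U) := forall x y, F i x -> F i y -> g x = g y -> x = y.
pose idx x := epsilon (inhabits i0) (covers x).
pose emb i := epsilon (inhabits (fun _ : T => u0)) (inj_on i).
have idxP x : (\bigcup_(i in J) F i) x -> covers x (idx x).
  by move=> [i Ji Fix]; apply: epsilon_spec; exists i.
have embP i : J i -> inj_on i (emb i).
  move=> Ji; apply: epsilon_spec.
  by have [g [_ ginj]] := card_le_exists_inj (FU _ Ji) u0; exists g.
apply: card_le_trans (card_le_setX_sq JU (card_lexx [set: U])).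
apply: (@card_le_inj _ _ _ _ (fun x => (idx x, emb (idx x) x))).
  by move=> x /idxP [].
move=> x y /idxP [Jx Fx] /idxP [Jy Fy] [e1 e2].
by rewrite -e1 in Fy e2; exact: embP Fx Fy e2.
Qed.

Variable u1 : U.
Hypothesis u01 : u0 <> u1.

Lemma card_le_setU_sq T (A B : set T) :
  A #<= [set: U] -> B #<= [set: U] -> A `|` B #<= [set: U].
Proof.
move=> AU BU; have -> : A `|` B = \bigcup_(b in [set: bool]) if b then A else B.
  apply/seteqP; split=> x; first by case=> ?; [exists true | exists false].
  by case=> -[] _ ?; [left | right].
apply: card_le_bigcup_sq => [|[] //].
apply: (@card_le_inj _ _ _ _ (fun b : bool => if b then u0 else u1)) => //.
by case; case => // _ _ e; case: u01; rewrite e.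
Qed.

End SquareCardinal.

Section PowersetOfSquareCardinal.
Variables (U : Type) (u0 u1 : U).
Hypotheses (u01 : u0 <> u1) (sqU : [set: U * U] #<= [set: U]).

Lemma card_le_powerset_square : [set: set (U * U)] #<= [set: set U].
Proof.
have powT W : [set Y : set W | Y `<=` [set: W]] = [set: set W].
  by apply/seteqP; split.
by rewrite -!powT; exact: card_le_powerset.
Qed.

Lemma card_le_powerset_setX : [set: set U * set U] #<= [set: set U].
Proof.
apply: card_le_trans card_le_powerset_square.
pose tag (X Y : set U) := [set z : U * U | (z.2 = u0 /\ X z.1) \/ (z.2 = u1 /\ Y z.1)].
have tag0 X Y : [set x | tag X Y (x, u0)] = X.
  by apply/seteqP; split=> x /=; [case=> -[] // /u01 | left].
have tag1 X Y : [set y | tag X Y (y, u1)] = Y.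
  by apply/seteqP; split=> y /=; [case=> -[] // /esym /u01 | right].
apply: (@card_le_inj _ _ _ _ (fun XY => tag XY.1 XY.2)) => // -[X Y] [X' Y'] _ _ e.
congr pair; first by rewrite -(tag0 X Y) -(tag0 X' Y') e.
by rewrite -(tag1 X Y) -(tag1 X' Y') e.
Qed.

Lemma card_le_powerset_fun : [set: U -> set U] #<= [set: set U].
Proof.
apply: card_le_trans card_le_powerset_square.
apply: (@card_le_inj _ _ _ _ (fun h => [set z : U * U | h z.1 z.2])) => // h h' _ _ e.
by apply/funext => a; apply/funext => b; exact: (congr1 (fun S => S (a, b)) e).
Qed.

(* S is recovered from the image of an injection [emb S : S -> U] and from the
   fibres [fib S : U -> set U] of [phi] along it. *)
Lemma card_le_powerset_subsets T (X : set T) : X #<= [set: set U] ->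
  [set S | S `<=` X /\ S #<= [set: U]] #<= [set: set U].
Proof.
move=> XU; have [phi [_ phi_inj]] := card_le_exists_inj XU set0.
pose inj_on (S : set T) (g : T -> U) := forall x y, S x -> S y -> g x = g y -> x = y.
pose emb S := epsilon (inhabits (fun _ : T => u0)) (inj_on S).
have embP S : S #<= [set: U] -> inj_on S (emb S).
  move=> SU; apply: epsilon_spec.
  by have [g [_ ginj]] := card_le_exists_inj SU u0; exists g.
pose fib (S : set T) (u : U) := [set b | exists2 x, S x & emb S x = u /\ phi x b].
have fibE S x : S #<= [set: U] -> S x -> fib S (emb S x) = phi x.
  move=> SU Sx; apply/seteqP; split=> b; last by exists x.
  by case=> y Sy [/(embP _ SU _ _ Sy Sx) ->].
have SE S : S `<=` X -> S #<= [set: U] ->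
    S = [set x | X x /\ exists2 u, (emb S @` S) u & fib S u = phi x].
  move=> SX SU; apply/seteqP; split=> x.
    by move=> Sx; split; [exact: SX | exists (emb S x); [exists x | exact: fibE]].
  case=> Xx [_ [y Sy <-]]; rewrite fibE // => /phi_inj <- //; exact: SX.
have sqP : [set: set U * set U] #<= [set: set U] := card_le_powerset_setX.
apply: card_le_trans (card_le_setX_sq set0 sqP (card_lexx _) card_le_powerset_fun).
apply: (@card_le_inj _ _ _ _ (fun S => (emb S @` S, fib S))) => //.
move=> S S' [SX SU] [S'X S'U] [e1 e2].
by rewrite (SE _ SX SU) (SE _ S'X S'U) e1 e2.
Qed.

End PowersetOfSquareCardinal.

Section Closure.
Variables (D : Type) (d0 d1 : D).
Hypotheses (d01 : d0 <> d1) (sqD : [set: D * D] #<= [set: D]).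
Variables (T : Type) (cl : set T -> set T).
Hypothesis card_cl : forall S, S #<= [set: D] -> cl S #<= [set: set D].
Variable s : set D -> set D -> Prop.
Hypotheses (s_wf : well_founded s) (s_irr : forall x, ~ s x x)
  (s_trans : forall x y z, s x y -> s y z -> s x z)
  (s_total : forall x y, x <> y -> s x y \/ s y x).

Let sqP : [set: set D * set D] #<= [set: set D] := card_le_powerset_setX d01 sqD.
Let DP : [set: D] #<= [set: set D] := (card_lt_powerset d0).1.

Let set0_neqT : set0 <> [set: D].
Proof. by move=> e; have : [set: D] d0 by []; rewrite -e. Qed.

Let card_set1 U (u : U) : [set u] #<= [set: D].
Proof. by apply: (@card_le_inj _ _ _ _ (fun _ => d0)) => // a b -> ->. Qed.

Definition cl_step X :=
  X `|` \bigcup_(S in [set S | S `<=` X /\ S #<= [set: D]]) cl S.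

Lemma cl_step_mono X Y : X `<=` Y -> cl_step X `<=` cl_step Y.
Proof.
move=> XY t [Xt|[S [SX SD] clSt]]; first by left; exact: XY.
by right; exists S => //; split=> //; exact: subset_trans XY.
Qed.

Lemma card_cl_step X : X #<= [set: set D] -> cl_step X #<= [set: set D].
Proof.
move=> XP; apply: (card_le_setU_sq sqP set0_neqT XP).
apply: (card_le_bigcup_sq set0 sqP) => [|S [_ SD]]; last exact: card_cl.
exact: (card_le_powerset_subsets d01 sqD XP).
Qed.

Definition cl_increasing (G : set D -> set T) :=
  forall x y, s x y -> cl_step (G x) `<=` G y.

(* [cl_stage] is the least family increasing along [s]: the transfinite
   iteration of [cl_step] from the empty set. *)
Definition cl_stage y := [set t | forall G, cl_increasing G -> G y t].

Lemma cl_stage_increasing : cl_increasing cl_stage.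
Proof.
move=> x y sxy t xt G incG; apply: (incG _ _ sxy).
by apply: cl_step_mono xt => t' /(_ G incG).
Qed.

Lemma cl_stage_sub y :
  cl_stage y `<=` \bigcup_(x in [set x | s x y]) cl_step (cl_stage x).
Proof.
pose G z := if pselect (z = y)
  then \bigcup_(x in [set x | s x y]) cl_step (cl_stage x) else cl_stage z.
have Gy : G y = \bigcup_(x in [set x | s x y]) cl_step (cl_stage x).
  by rewrite /G; case: pselect.
have GE z : z <> y -> G z = cl_stage z by rewrite /G; case: pselect.
have G_stage z : G z `<=` cl_stage z.
  have [->|/GE -> //] := pselect (z = y).
  by rewrite Gy => t [x sxy xt]; exact: cl_stage_increasing sxy _ xt.
have incG : cl_increasing G.
  move=> x z sxz; have [zy|/GE ->] := pselect (z = y).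
    have xy : x <> y by move=> xy; subst; exact: s_irr sxz.
    by rewrite zy Gy GE // => t xt; exists x; rewrite // -zy.
  exact: subset_trans (cl_step_mono (G_stage x)) (cl_stage_increasing sxz).
by move=> t /(_ G incG); rewrite Gy.
Qed.

(* An initial segment of [s] of order type delta^+. *)
Definition short := [set x | [set y | s y x] #<= [set: D]].

Lemma short_down x y : short x -> s y x -> short y.
Proof.
move=> xD syx; apply: card_le_trans xD; apply: subset_card_le => z szy.
exact: s_trans szy syx.
Qed.

Lemma card_cl_stage y : short y -> cl_stage y #<= [set: set D].
Proof.
elim/(well_founded_induction s_wf): y => y IHy yD.
apply: card_le_trans (subset_card_le (@cl_stage_sub y)) _.
apply: (card_le_bigcup_sq set0 sqP (card_le_trans yD DP)) => x sxy.
by apply/card_cl_step/IHy => //; exact: short_down yD sxy.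
Qed.

Lemma short_not_card_le : ~ (short #<= [set: D]).
Proof.
move=> shortD; have all_short y : short y.
  elim/(well_founded_induction s_wf): y => y IHy.
  by apply: card_le_trans shortD; apply: subset_card_le => z /IHy.
apply: (card_lt_powerset d0).2; apply: card_le_trans shortD.
by apply: subset_card_le => z _; exact: all_short.
Qed.

Lemma short_bounded (X : set (set D)) : X `<=` short -> X #<= [set: D] ->
  exists2 z, short z & forall x, X x -> s x z.
Proof.
move=> Xshort XD; apply: contrapT => nz; apply: short_not_card_le.
have sub : short `<=` \bigcup_(x in X) ([set y | s y x] `|` [set x]).
  move=> y yshort; apply: contrapT => ny; apply: nz; exists y => // x Xx.
  apply: contrapT => nxy; apply: ny; exists x => //.
  have [->|ne] := pselect (x = y); first by right.
  by case: (s_total ne) => // syx; left.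
apply: card_le_trans (subset_card_le sub) _.
apply: (card_le_bigcup_sq d0 sqD XD) => x Xx.
exact: (card_le_setU_sq sqD d01 (Xshort _ Xx) (card_set1 x)).
Qed.

Definition cl_closure := \bigcup_(y in short) cl_stage y.

Lemma card_cl_closure : cl_closure #<= [set: set D].
Proof. exact: (card_le_bigcup_sq set0 sqP (card_leT short) card_cl_stage). Qed.

Lemma cl_closure_closed S :
  S `<=` cl_closure -> S #<= [set: D] -> cl S `<=` cl_closure.
Proof.
move=> SN SD; have [y0 _ _] := short_bounded (@sub0set _ short) (card_ge0 _ _).
pose staged t y := short y /\ cl_stage y t.
pose stage_of t := epsilon (inhabits y0) (staged t).
have stage_ofP t : S t -> staged t (stage_of t).
  by move=> /SN [y yshort yt]; apply: epsilon_spec; exists y.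
have [z zshort zbound] : exists2 z, short z & forall x, (stage_of @` S) x -> s x z.
  apply: short_bounded; last exact: card_le_trans (card_image_le _ _) SD.
  by move=> _ [t St <-]; exact: (stage_ofP _ St).1.
have [z' z'short zz'] : exists2 z', short z' & forall x, [set z] x -> s x z'.
  by apply: short_bounded (card_set1 z) => _ ->.
have Sz : S `<=` cl_stage z.
  move=> t St; apply: cl_stage_increasing (zbound _ (ex_intro2 _ _ t St erefl)) _ _.
  by left; exact: (stage_ofP _ St).2.
move=> t clSt; exists z' => //; apply: cl_stage_increasing (zz' _ erefl) _ _.
by right; exists S.
Qed.

End Closure.

Lemma exists_cl_closed D (d0 d1 : D) T (cl : set T -> set T) :
  d0 <> d1 -> [set: D * D] #<= [set: D] ->
  (forall S, S #<= [set: D] -> cl S #<= [set: set D]) ->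
  exists2 N, N #<= [set: set D] &
    forall S, S `<=` N -> S #<= [set: D] -> cl S `<=` N.
Proof.
move=> d01 sqD card_cl; have [s [s_wf s_irr s_trans s_total]] := exists_wo (set D).
exists (cl_closure cl s).
  exact: (card_cl_closure d01 sqD card_cl s_wf s_irr s_trans).
exact: (cl_closure_closed d01 sqD s_wf s_total).
Qed.

Section Antichain.
Variables (D L : Type) (lt : D -> D -> Prop) (d0 d1 : D).
Hypotheses (wo : initial_wo lt) (SL : strong_limit [set: D]) (d01 : d0 <> d1).

Let sqD : [set: D * D] #<= [set: D] := card_le_square d0 wo SL.
Let sqP : [set: set D * set D] #<= [set: set D] := card_le_powerset_setX d01 sqD.
Let DP : [set: D] #<= [set: set D] := (card_lt_powerset d0).1.

Let card_lt_set0 : card_lt (@set0 L) [set: D].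
Proof.
split; first exact: card_ge0.
by move/card_le0P => D0; have : [set: D] d0 by []; rewrite D0.
Qed.

Definition Kagree (S : set L) (p q : Kcond D L) :=
  Kalpha p = Kalpha q /\
  forall i, S i -> forall b, lt b (Kalpha p) -> Kr p i b = Kr q i b.

Lemma Kcompat_agree p q : Kcond_ok p -> Kcond_ok q ->
  Kagree (Kw p `&` Kw q) p q -> Kcompat lt p q.
Proof.
move=> /card_eqPle [pD Dp] /card_eqPle [qD _] [ea agree].
pose r i b := if pselect (Kw p i) then Kr p i b else Kr q i b.
exists (MkK (Kw p `|` Kw q) (Kalpha p) r); split; [|split; split=> /=].
- apply/card_eqPle; split; first exact: (card_le_setU_sq sqD d01 pD qD).
  by apply: card_le_trans Dp _; apply: subset_card_le => i; left.
- by move=> i; left.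
- by right.
- by move=> i pi b _; rewrite /r; case: pselect.
- set Z := (X in card_lt X _); suff -> : Z = set0 by exact: card_lt_set0.
  by apply/seteqP; split=> // i [_ [b [nb [bp _]]]].
- by move=> i; right.
- by rewrite ea; right.
- move=> i qi b bq; rewrite /r; case: pselect => // pi.
  by rewrite agree // ea.
- set Z := (X in card_lt X _); suff -> : Z = set0 by exact: card_lt_set0.
  by apply/seteqP; split=> // i [_ [b [nb [bp _]]]]; apply: nb; rewrite -ea.
Qed.

Variable A : set (Kcond D L).
Hypothesis hA : Kantichain lt A.

Lemma Kw_card_le p : A p -> Kw p #<= [set: D].
Proof. by move/hA.1/card_eqPle => []. Qed.

Lemma Kantichain_eq p q : A p -> A q -> Kagree (Kw p `&` Kw q) p q -> p = q.
Proof.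
move=> Ap Aq pq; apply: contrapT => npq.
exact: (hA.2 _ _ Ap Aq npq (Kcompat_agree (hA.1 _ Ap) (hA.1 _ Aq) pq)).
Qed.

(* [embD S] is injective on S when |S| <= delta, and junk otherwise; through
   it, the type of p on S (its height and its bits on S below it) is coded by
   an element of D * set (D * D). *)
Definition embD (S : set L) : L -> D := epsilon (inhabits (fun=> d0))
  (fun e => forall i j, S i -> S j -> e i = e j -> i = j).

Lemma embD_inj S : S #<= [set: D] ->
  forall i j, S i -> S j -> embD S i = embD S j -> i = j.
Proof.
move=> SD; apply: (epsilon_spec _
  (fun e : L -> D => forall i j, S i -> S j -> e i = e j -> i = j)).
by have [e [_ einj]] := card_le_exists_inj SD d0; exists e.
Qed.

Definition Ktype (S : set L) (p : Kcond D L) : D * set (D * D) :=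
  (Kalpha p, [set z | exists2 i, S i &
                        [/\ embD S i = z.1, lt z.2 (Kalpha p) & Kr p i z.2]]).

Lemma KtypeP S p i b : S #<= [set: D] -> S i -> lt b (Kalpha p) ->
  (Ktype S p).2 (embD S i, b) <-> Kr p i b.
Proof.
move=> SD Si bp; split; last by move=> pib; exists i.
by case=> j Sj [/(embD_inj SD Sj Si) ->].
Qed.

Lemma Kagree_Ktype S p q : S #<= [set: D] -> Ktype S p = Ktype S q -> Kagree S p q.
Proof.
move=> SD e; have ea : Kalpha p = Kalpha q := congr1 fst e.
have e2 := congr1 snd e; split=> // i Si b bp; have bq : lt b (Kalpha q) by rewrite -ea.
apply/idP/idP => pib.
  by apply/(KtypeP SD Si bq); rewrite -e2; apply/(KtypeP SD Si bp).
by apply/(KtypeP SD Si bp); rewrite e2; apply/(KtypeP SD Si bq).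
Qed.

Lemma card_Ktypes : [set: D * set (D * D)] #<= [set: set D].
Proof.
rewrite -setXTT; exact: (card_le_setX_sq set0 sqP DP (card_le_powerset_square sqD)).
Qed.

Definition Krep (S : set L) (c : D * set (D * D)) :=
  epsilon (inhabits (MkK set0 d0 (fun _ _ => false)))
    (fun p => [/\ A p, S `<=` Kw p & Ktype S p = c]).

Lemma Krep_spec S q : A q -> S `<=` Kw q ->
  let p := Krep S (Ktype S q) in [/\ A p, S `<=` Kw p & Ktype S p = Ktype S q].
Proof.
move=> Aq Sq; apply: (epsilon_spec _
  (fun p => [/\ A p, S `<=` Kw p & Ktype S p = Ktype S q])).
by exists q.
Qed.

Definition Kw_reps (S : set L) :=
  \bigcup_(c in Ktype S @` [set q | A q /\ S `<=` Kw q]) Kw (Krep S c).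

Lemma card_Kw_reps S : Kw_reps S #<= [set: set D].
Proof.
apply: (card_le_bigcup_sq set0 sqP) => [|_ [q [Aq Sq] <-]].
  exact: card_le_trans (card_leT _) card_Ktypes.
have [Ap _ _] := Krep_spec Aq Sq.
exact: card_le_trans (Kw_card_le Ap) DP.
Qed.

Lemma Kw_sub_of_closed N :
  (forall S, S `<=` N -> S #<= [set: D] -> Kw_reps S `<=` N) ->
  forall q, A q -> Kw q `<=` N.
Proof.
move=> closedN q Aq; pose S := Kw q `&` N.
have Sq : S `<=` Kw q by move=> i [].
have SD : S #<= [set: D] := card_le_trans (subset_card_le Sq) (Kw_card_le Aq).
have [Ap Sp tp] := Krep_spec Aq Sq; set p := Krep _ _ in Ap Sp tp.
have pN : Kw p `<=` N.
  move=> i pi; apply: (closedN S) => //; first by move=> j [].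
  by exists (Ktype S q) => //; exists q.
suff <- : p = q by [].
apply: Kantichain_eq Ap Aq _; have [ea agree] := Kagree_Ktype SD tp.
by split=> // i [pi qi]; apply: agree; split=> //; exact: pN.
Qed.

Theorem Kantichain_card_le_powerset : A #<= [set: set D].
Proof.
have [N ND closedN] := exists_cl_closed d01 sqD (fun S _ => card_Kw_reps S).
apply: card_le_trans
  (card_le_setX_sq set0 sqP (card_le_powerset_subsets d01 sqD ND) card_Ktypes).
apply: (@card_le_inj _ _ _ _ (fun q => (Kw q, Ktype (Kw q) q))).
  by move=> q Aq; split=> //; split; [exact: Kw_sub_of_closed | exact: Kw_card_le].
move=> q q' Aq Aq' /pair_equal_spec [e1 e2]; rewrite e1 in e2.
have [ea agree] := Kagree_Ktype (Kw_card_le Aq') e2.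
by apply: Kantichain_eq Aq Aq' _; split=> // i [_ q'i]; exact: agree.
Qed.

End Antichain.

Unset Implicit Arguments.
Set Strict Implicit.

Theorem lemma5 (D L P : Type) (lt : D -> D -> Prop) :
  initial_wo lt ->
  regular_card [set: D] -> regular_card [set: L] ->
  card_lt [set: D] [set: L] ->
  is_succ_card [set: D] [set: P] ->
  card_lt [set: P] [set: L] ->
  inaccessible [set: D] ->
  (inaccessible [set: L] \/
   exists (M : Type), is_succ_card [set: M] [set: L] /\ cf_gt [set: M] [set: D]) ->
  [set: set D] #= [set: P] ->
  forall A : set (Kcond D L), Kantichain lt A -> A #<= [set: P].
Proof.
move=> wo _ _ _ _ _ [uncountableD [_ SL]] _ powD_P A hA.
have [d0 _] := infinite_setN0 (fun finD => uncountableD (finite_set_countable finD)).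
have [d1 d01] := strong_limit_exists_neq d0 SL.
apply: card_le_trans (Kantichain_card_le_powerset wo SL d01 hA) _.
by have /card_eqPle [] := powD_P.
Qed.
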